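(* Let $K$ be a non-archimedean local field. A non-elementary subgroup $G$ of $\mathrm{SL}_2(K)$ is discrete if and only if every subgroup of $G$ generated by two elements is discrete.
   Context: A non-archimedean local field is a finite extension of $\mathbb{Q}_p$ or $\mathbb{F}_q((t))$. $\mathrm{SL}_2(K)$ has the subspace topology from $K^4$ and acts by isometries on its Bruhat–Tits tree $T_K$. A subgroup is elementary if it stabilises a vertex, an end, or a pair of ends of $T_K$, and non-elementary otherwise. *)

From mathcomp Require Import all_boot all_order all_algebra.
From mathcomp Require Import reals.
Set Implicit Arguments. Unset Strict Implicit. Unset Printing Implicit Defensive.
Import Order.TTheory GRing.Theory Num.Theory.
Local Open Scope ring_scope.

Section LocalField.
Variables (R : realType) (K : fieldType) (nu : K -> R).

Definition ultrametric_abs : Prop :=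
  [/\ forall x, 0 <= nu x,
      forall x, nu x = 0 <-> x = 0,
      forall x y, nu (x * y) = nu x * nu y &
      forall x y, nu (x + y) <= Num.max (nu x) (nu y)].

Definition uniformizer (p : K) : Prop :=
  0 < nu p < 1 /\ forall x, nu x < 1 -> nu x <= nu p.

Definition discrete_abs : Prop :=
  exists p, uniformizer p /\ forall x, x != 0 -> exists n : int, nu x = nu p ^ n.

Definition cauchy_seq (u : nat -> K) : Prop :=
  forall e : R, 0 < e -> exists N, forall m n, (N <= m)%N -> (N <= n)%N ->
    nu (u m - u n) < e.

Definition converges_to (u : nat -> K) (l : K) : Prop :=
  forall e : R, 0 < e -> exists N, forall n, (N <= n)%N -> nu (u n - l) < e.

Definition complete_abs : Prop :=
  forall u, cauchy_seq u -> exists l, converges_to u l.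

(** The residue field O / m is finite: finitely many residues of integers. *)
Definition finite_residue_field : Prop :=
  exists s : seq K, (forall a, a \in s -> nu a <= 1) /\
    forall x, nu x <= 1 -> exists2 a, a \in s & nu (x - a) < 1.

Definition nonarch_local_field : Prop :=
  [/\ ultrametric_abs, discrete_abs, complete_abs & finite_residue_field].

Definition mat := 'M[K]_2.
Definition vec := 'cV[K]_2.

Definition is_subgroup_SL2 (G : mat -> Prop) : Prop :=
  [/\ forall g, G g -> \det g = 1,
      G 1%:M,
      forall g h, G g -> G h -> G (g *m h) &
      forall g, G g -> G (invmx g)].

Definition gen2 (a b : mat) : mat -> Prop :=
  fun x => forall H, is_subgroup_SL2 H -> H a -> H b -> H x.

(** Discreteness for the subspace topology induced from K^4. *)
Definition discrete_subgroup (G : mat -> Prop) : Prop :=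
  forall g, G g -> exists2 e : R, 0 < e &
    forall h, G h -> (forall i j, nu (h i j - g i j) < e) -> h = g.

Definition lattice (g : mat) : vec -> Prop :=
  fun v => exists u : vec, (forall i, nu (u i 0) <= 1) /\ v = g *m u.

Definition scale_set (c : K) (L : vec -> Prop) : vec -> Prop :=
  fun v => exists w, L w /\ v = c *: w.

Definition subset_set (L L' : vec -> Prop) : Prop := forall v, L v -> L' v.
Definition psubset_set (L L' : vec -> Prop) : Prop :=
  subset_set L L' /\ exists v, L' v /\ ~ L v.

(** vertices of T_K: invertible matrices up to homothety of their lattices *)
Definition vertex (g : mat) : Prop := g \in unitmx.

Definition same_vertex (g h : mat) : Prop :=
  exists2 c : K, c != 0 & forall v, lattice h v <-> scale_set c (lattice g) v.

Definition adjacent (g h : mat) : Prop :=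
  exists p c, [/\ uniformizer p, c != 0,
    psubset_set (scale_set p (lattice g)) (scale_set c (lattice h)) &
    psubset_set (scale_set c (lattice h)) (lattice g)].

Definition ray (r : nat -> mat) : Prop :=
  forall n, [/\ vertex (r n), adjacent (r n) (r n.+1) & ~ same_vertex (r n) (r n.+2)].

Definition same_end (r r' : nat -> mat) : Prop :=
  exists k m, forall n, same_vertex (r (n + k)%N) (r' (n + m)%N).

Definition act_ray (a : mat) (r : nat -> mat) : nat -> mat := fun n => a *m r n.

Definition stabilises_vertex (G : mat -> Prop) : Prop :=
  exists2 h, vertex h & forall a, G a -> same_vertex (a *m h) h.

Definition stabilises_end (G : mat -> Prop) : Prop :=
  exists2 r, ray r & forall a, G a -> same_end (act_ray a r) r.

Definition stabilises_pair_of_ends (G : mat -> Prop) : Prop :=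
  exists r1 r2, [/\ ray r1, ray r2, ~ same_end r1 r2 &
    forall a, G a ->
      (same_end (act_ray a r1) r1 /\ same_end (act_ray a r2) r2) \/
      (same_end (act_ray a r1) r2 /\ same_end (act_ray a r2) r1)].

Definition elementary (G : mat -> Prop) : Prop :=
  stabilises_vertex G \/ stabilises_end G \/ stabilises_pair_of_ends G.

End LocalField.

(* A subgroup of SL_2(K) is discrete iff 1 is isolated in it.  Since the
   residue field is finite, some n > 0 satisfies |n| < 1.  If n <> 0 in K, the
   power map contracts a neighbourhood of 1: |h^(n^k) - 1| = |n|^k |h - 1|, so
   an element h <> 1 close to 1 would generate a non-discrete cyclic group.
   If n = 0 in K, then K has characteristic p and (1 + X)^(p^k) = 1 + X^(p^k);
   discreteness of cyclic groups makes every h close to 1 unipotent, and trace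
   identities then give (h' - 1)(h - 1) = 0 for all such h, h'.  If 1 were not
   isolated, the common kernel line of these h - 1 would be an eigenline of
   every element of G (conjugation keeps elements close to 1), so G would fix
   the end of the tree towards that line. *)

From mathcomp Require Import all_boot all_order all_algebra.
From mathcomp Require Import reals topology normedtype sequences.
From mathcomp Require Import ring lra.
From Stdlib Require Import Classical.
Set Implicit Arguments. Unset Strict Implicit. Unset Printing Implicit Defensive.
Import Order.TTheory GRing.Theory Num.Theory numFieldNormedType.Exports.
Local Open Scope ring_scope.

(** * Two-by-two matrices *)

Lemma ord2P (i : 'I_2) : i = 0 \/ i = 1.
Proof. by case: i => [[|[|//]]] ?; [left | right]; apply/val_inj. Qed.

Section Matrix2Entries.
Variable T : Type.

Definition mx2 (a b c d : T) : 'M[T]_2 :=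
  \matrix_(i, j) if i == 0 then (if j == 0 then a else b) else (if j == 0 then c else d).
Definition cv2 (a b : T) : 'cV[T]_2 := \matrix_(i, j) if i == 0 then a else b.

Lemma mx2E00 a b c d : mx2 a b c d 0 0 = a. Proof. by rewrite !mxE. Qed.
Lemma mx2E01 a b c d : mx2 a b c d 0 1 = b. Proof. by rewrite !mxE. Qed.
Lemma mx2E10 a b c d : mx2 a b c d 1 0 = c. Proof. by rewrite !mxE. Qed.
Lemma mx2E11 a b c d : mx2 a b c d 1 1 = d. Proof. by rewrite !mxE. Qed.
Lemma cv2E0 a b : cv2 a b 0 0 = a. Proof. by rewrite !mxE. Qed.
Lemma cv2E1 a b : cv2 a b 1 0 = b. Proof. by rewrite !mxE. Qed.
Definition mx2E := (mx2E00, mx2E01, mx2E10, mx2E11, cv2E0, cv2E1).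

Lemma eq_mx2 (A B : 'M[T]_2) :
  A 0 0 = B 0 0 -> A 0 1 = B 0 1 -> A 1 0 = B 1 0 -> A 1 1 = B 1 1 -> A = B.
Proof.
move=> e00 e01 e10 e11; apply/matrixP => i j.
by case: (ord2P i) => ->; case: (ord2P j) => ->.
Qed.

Lemma eq_cv2 (u v : 'cV[T]_2) : u 0 0 = v 0 0 -> u 1 0 = v 1 0 -> u = v.
Proof.
move=> e0 e1; apply/matrixP => i j; rewrite [j]ord1.
by case: (ord2P i) => ->.
Qed.

End Matrix2Entries.

Section Matrix2.
Variable R : comNzRingType.
Implicit Types A B : 'M[R]_2.

Lemma mulmx2E m n (A : 'M[R]_(m, 2)) (B : 'M[R]_(2, n)) i j :
  (A *m B) i j = A i 0 * B 0 j + A i 1 * B 1 j.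
Proof.
by rewrite mxE big_ord_recl big_ord1; congr (_ + A i _ * B _ j); apply/val_inj.
Qed.

Lemma mulmx_diag2 a b (x : 'cV[R]_2) : mx2 a 0 0 b *m x = cv2 (a * x 0 0) (b * x 1 0).
Proof. by apply: eq_cv2; rewrite mulmx2E !mx2E; ring. Qed.

Lemma det_mx2 A : \det A = A 0 0 * A 1 1 - A 0 1 * A 1 0.
Proof.
rewrite (expand_det_row _ 0) big_ord_recl big_ord1 /cofactor !det_mx11 !mxE /=.
rewrite expr0 expr1 mul1r mulN1r mulrN.
by congr (A _ _ * A _ _ - A _ _ * A _ _); apply/val_inj.
Qed.

Lemma mxtrace_mx2 A : \tr A = A 0 0 + A 1 1.
Proof. by rewrite /mxtrace big_ord_recl big_ord1; congr (_ + A _ _); apply/val_inj. Qed.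

Lemma Cayley_Hamilton_mx2 A : A *m A = \tr A *: A - (\det A)%:M.
Proof. by rewrite mxtrace_mx2 det_mx2; apply: eq_mx2; rewrite mulmx2E !mxE /=; ring. Qed.

End Matrix2.

Section SquareZero.
Variable R : idomainType.
Implicit Types A X Y : 'M[R]_2.

Lemma sqmx0_trace_det A : A *m A = 0 -> \tr A = 0 /\ \det A = 0.
Proof.
move=> AA0.
have dA : \det A = 0.
  by apply/eqP; rewrite -sqrf_eq0 expr2 -det_mulmx AA0 det0.
split=> //; move/eqP: AA0; rewrite Cayley_Hamilton_mx2 dA raddf0 subr0.
by rewrite scalemx_eq0 => /orP[/eqP // | /eqP ->]; rewrite mxtrace0.
Qed.

Lemma nilpotent_mx2_sq0 A n : (0 < n)%N -> A ^+ n = 0 -> A *m A = 0.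
Proof.
move=> n_gt0 An0.
have dA : \det A = 0.
  have detX k : \det (A ^+ k) = \det A ^+ k.
    by elim: k => [|k IH]; rewrite ?det1 // exprSr -mulmxE det_mulmx IH exprSr.
  by apply/eqP; have /eqP := det0 R 1; rewrite -An0 detX expf_eq0 n_gt0.
have AA : A *m A = \tr A *: A by rewrite Cayley_Hamilton_mx2 dA raddf0 subr0.
have AX k : A ^+ k.+1 = \tr A ^+ k *: A.
  elim: k => [|k IH]; first by rewrite expr1 expr0 scale1r.
  by rewrite exprSr IH -mulmxE -scalemxAl AA scalerA -exprSr.
move: An0; case: n n_gt0 => // n _; rewrite AX => /eqP.
rewrite scalemx_eq0 expf_eq0 => /orP[/andP[_ /eqP t0] | /eqP ->].
  by rewrite AA t0 scale0r.
by rewrite mulmx0.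
Qed.

(* Each entry of [Y *m X] has its square in the ideal generated by
   [tr X], [det X], [tr Y], [det Y] and [tr (X *m Y)]. *)
Lemma sqmx0_trace_mul_eq0 X Y :
  X *m X = 0 -> Y *m Y = 0 -> \tr (X *m Y) = 0 -> Y *m X = 0.
Proof.
move=> /sqmx0_trace_det[tX dX] /sqmx0_trace_det[tY dY].
move: tX dX tY dY; rewrite !mxtrace_mx2 !det_mx2 !mulmx2E.
set a := X 0 0; set b := X 0 1; set c := X 1 0; set d := X 1 1.
set a' := Y 0 0; set b' := Y 0 1; set c' := Y 1 0; set d' := Y 1 1.
move=> tX dX tY dY tXY.
have hd : d = - a by apply/eqP; rewrite -addr_eq0 addrC tX.
have hd' : d' = - a' by apply/eqP; rewrite -addr_eq0 addrC tY.
rewrite hd in dX tXY; rewrite hd' in dY tXY.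
set t := (a * a' + b * c' + _) in tXY.
set dx := (a * - a - _) in dX; set dy := (a' * - a' - _) in dY.
have sq0 (x : R) : x * x = 0 -> x = 0 by move/eqP; rewrite mulf_eq0 orbb => /eqP.
apply: eq_mx2; rewrite mulmx2E !mxE -/a -/b -/c -/d -/a' -/b' -/c' -/d' ?hd ?hd'; apply: sq0.
- have -> : (a' * a + b' * c) * (a' * a + b' * c) =
    b' * c * t - a' * a' * dx + b * c * dy by rewrite /t /dx /dy; ring.
  by rewrite tXY dX dY; ring.
- have -> : (a' * b + b' * - a) * (a' * b + b' * - a) =
    - b * b' * t - b * b * dy - b' * b' * dx by rewrite /t /dx /dy; ring.
  by rewrite tXY dX dY; ring.
- have -> : (c' * a + - a' * c) * (c' * a + - a' * c) =
    - c * c' * t - c * c * dy - c' * c' * dx by rewrite /t /dx /dy; ring.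
  by rewrite tXY dX dY; ring.
- have -> : (c' * b + - a' * - a) * (c' * b + - a' * - a) =
    b * c' * t - a' * a' * dx + b * c * dy by rewrite /t /dx /dy; ring.
  by rewrite tXY dX dY; ring.
Qed.

End SquareZero.

Lemma mx2_kernel_colinear (K : fieldType) (Y : 'M[K]_2) (u v : 'cV[K]_2) :
  Y != 0 -> u != 0 -> Y *m u = 0 -> Y *m v = 0 -> exists l, v = l *: u.
Proof.
move=> Y0 u0 Yu Yv.
have eu i : Y i 0 * u 0 0 + Y i 1 * u 1 0 = 0 by rewrite -mulmx2E Yu mxE.
have ev i : Y i 0 * v 0 0 + Y i 1 * v 1 0 = 0 by rewrite -mulmx2E Yv mxE.
have D0 : u 0 0 * v 1 0 = u 1 0 * v 0 0.
  apply/eqP; rewrite -subr_eq0; apply: contraNT Y0 => D0; apply/eqP/matrixP => i j.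
  rewrite mxE; apply: (mulIf D0); case: (ord2P j) => ->.
  - have -> : Y i 0 * (u 0 0 * v 1 0 - u 1 0 * v 0 0) =
      v 1 0 * (Y i 0 * u 0 0 + Y i 1 * u 1 0) - u 1 0 * (Y i 0 * v 0 0 + Y i 1 * v 1 0)
      by ring.
    by rewrite eu ev; ring.
  - have -> : Y i 1 * (u 0 0 * v 1 0 - u 1 0 * v 0 0) =
      u 0 0 * (Y i 0 * v 0 0 + Y i 1 * v 1 0) - v 0 0 * (Y i 0 * u 0 0 + Y i 1 * u 1 0)
      by ring.
    by rewrite eu ev; ring.
have [u00|u00] := eqVneq (u 0 0) 0.
  have u10 : u 1 0 != 0.
    by apply: contraNneq u0 => u10; apply/eqP/eq_cv2; rewrite mxE.
  exists (v 1 0 / u 1 0); apply: eq_cv2; rewrite mxE ?divfK //.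
  have /eqP : u 1 0 * v 0 0 = 0 by rewrite -D0 u00 mul0r.
  by rewrite mulf_eq0 (negbTE u10) => /eqP->; rewrite u00 mulr0.
exists (v 0 0 / u 0 0); apply: eq_cv2; rewrite mxE ?divfK //.
by apply: (mulfI u00); rewrite D0 mulrCA mulrA divfK // mulrC.
Qed.

Lemma exprD1_pchar (R : nzRingType) p (x : R) k :
  p \in [pchar R] -> (x + 1) ^+ (p ^ k) = x ^+ (p ^ k) + 1.
Proof.
move=> pR; elim: k => [|k IH]; first by rewrite expn0 !expr1.
rewrite expnSr !exprM IH.
by have := pFrobenius_autD_comm pR (commr1 (x ^+ (p ^ k))); rewrite pFrobenius_aut1.
Qed.

Lemma exists_exprn_lt (R : realType) (q e : R) : 0 <= q -> q < 1 -> 0 < e ->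
  exists N : nat, q ^+ N < e.
Proof.
move=> q0 q1 e0; have q1' : `|q| < 1 by rewrite ger0_norm.
have [N _ HN] := cvgr0_norm_lt _ (cvg_expr q1') _ e0.
by exists N; have := HN N (leqnn N); rewrite /= normrX ger0_norm.
Qed.

(** * Non-archimedean absolute values *)

Section LocalField.
Variables (R : realType) (K : fieldType) (nu : K -> R).
Hypothesis nu_abs : ultrametric_abs nu.

Lemma nu_ge0 x : 0 <= nu x. Proof. by case: nu_abs. Qed.
Lemma nu_eq0 x : nu x = 0 <-> x = 0. Proof. by case: nu_abs. Qed.
Lemma nuM x y : nu (x * y) = nu x * nu y. Proof. by case: nu_abs. Qed.
Lemma nuD x y : nu (x + y) <= Num.max (nu x) (nu y). Proof. by case: nu_abs. Qed.

Lemma nu0 : nu 0 = 0. Proof. exact/nu_eq0. Qed.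

Lemma nu_gt0 x : x != 0 -> 0 < nu x.
Proof. by move=> x0; rewrite lt_def nu_ge0 andbT; apply: contraNneq x0 => /nu_eq0->. Qed.

Lemma nu1 : nu 1 = 1.
Proof.
apply: (mulIf (lt0r_neq0 (nu_gt0 (oner_neq0 K)))).
by rewrite -nuM !mul1r.
Qed.

Lemma nuN x : nu (- x) = nu x.
Proof.
have nuN1 : nu (-1) = 1.
  by apply/eqP; rewrite -sqrp_eq1 ?nu_ge0 // expr2 -nuM mulrNN mulr1 nu1.
by rewrite -mulN1r nuM nuN1 mul1r.
Qed.

Lemma nuV x : nu x^-1 = (nu x)^-1.
Proof.
have [->|x0] := eqVneq x 0; first by rewrite invr0 nu0 invr0.
by apply: (mulrI (unitf_gt0 (nu_gt0 x0))); rewrite -nuM !divff ?nu1 // lt0r_neq0 ?nu_gt0.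
Qed.

Lemma nuX x n : nu (x ^+ n) = nu x ^+ n.
Proof. by elim: n => [|n IH]; rewrite ?nu1 // !exprS nuM IH. Qed.

Lemma nuD_le x y r : nu x <= r -> nu y <= r -> nu (x + y) <= r.
Proof. by move=> xr yr; apply: le_trans (nuD x y) _; rewrite ge_max xr yr. Qed.

Lemma nuD_lt x y r : nu x < r -> nu y < r -> nu (x + y) < r.
Proof. by move=> xr yr; apply: le_lt_trans (nuD x y) _; rewrite gt_max xr yr. Qed.

Lemma nuD_dominant x y : nu y < nu x -> nu (x + y) = nu x.
Proof.
move=> yx; apply/le_anti; rewrite (nuD_le (lexx _) (ltW yx)) /=.
have := nuD (x + y) (- y); rewrite addrK nuN le_max => /orP[//|].
by rewrite leNgt yx.
Qed.

Lemma nu_sum_le (I : finType) (F : I -> K) r :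
  0 <= r -> (forall i, nu (F i) <= r) -> nu (\sum_i F i) <= r.
Proof.
move=> r0 Fr; elim/big_ind: _ => //; first by rewrite nu0.
by move=> x y; apply: nuD_le.
Qed.

Lemma nu_natr_le1 n : nu n%:R <= 1.
Proof. by elim: n => [|n IH]; rewrite ?nu0 ?ler01 // -addn1 natrD nuD_le ?nu1. Qed.

Definition mxnorm (A : 'M[K]_2) : R :=
  Num.max (Num.max (nu (A 0 0)) (nu (A 0 1))) (Num.max (nu (A 1 0)) (nu (A 1 1))).

Implicit Types A B : 'M[K]_2.

Lemma mxnorm_ge A i j : nu (A i j) <= mxnorm A.
Proof.
by rewrite /mxnorm; case: (ord2P i) => ->; case: (ord2P j) => ->;
  rewrite !le_max lexx ?orbT.
Qed.

Lemma mxnorm_le A r : (forall i j, nu (A i j) <= r) -> mxnorm A <= r.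
Proof. by move=> Ar; rewrite /mxnorm !ge_max !Ar. Qed.

Lemma mxnorm_lt A r : (forall i j, nu (A i j) < r) -> mxnorm A < r.
Proof. by move=> Ar; rewrite /mxnorm !gt_max !Ar. Qed.

Lemma mxnorm_ltP A r : mxnorm A < r -> forall i j, nu (A i j) < r.
Proof. by move=> Ar i j; apply: le_lt_trans (mxnorm_ge A i j) Ar. Qed.

Lemma mxnorm_ge0 A : 0 <= mxnorm A.
Proof. exact: le_trans (nu_ge0 _) (mxnorm_ge A 0 0). Qed.

Lemma mxnorm_attained A : exists i j, nu (A i j) = mxnorm A.
Proof. by rewrite /mxnorm !maxEle; repeat case: ifP => _; do 2 eexists. Qed.

Lemma mxnorm0 : mxnorm 0 = 0.
Proof. by apply/le_anti; rewrite mxnorm_ge0 andbT mxnorm_le // => i j; rewrite mxE nu0. Qed.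

Lemma mxnorm_eq0 A : (mxnorm A == 0) = (A == 0).
Proof.
apply/eqP/eqP => [A0|->]; last exact: mxnorm0.
apply/matrixP => i j; rewrite mxE; apply/nu_eq0.
by apply/le_anti; rewrite nu_ge0 -A0 mxnorm_ge.
Qed.

Lemma mxnorm_gt0 A : A != 0 -> 0 < mxnorm A.
Proof. by move=> A0; rewrite lt_def mxnorm_ge0 mxnorm_eq0 A0. Qed.

Lemma mxnormD_le A B r : mxnorm A <= r -> mxnorm B <= r -> mxnorm (A + B) <= r.
Proof.
move=> Ar Br; apply: mxnorm_le => i j; rewrite mxE.
by apply: nuD_le; apply: le_trans (mxnorm_ge _ i j) _.
Qed.

Lemma mxnormD_lt A B r : mxnorm A < r -> mxnorm B < r -> mxnorm (A + B) < r.
Proof.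
move=> Ar Br; apply: mxnorm_lt => i j; rewrite mxE.
by apply: nuD_lt; apply: le_lt_trans (mxnorm_ge _ i j) _.
Qed.

Lemma mxnormD_dominant A B : mxnorm B < mxnorm A -> mxnorm (A + B) = mxnorm A.
Proof.
move=> BA; apply/le_anti; rewrite mxnormD_le ?(ltW BA) //=.
have [i [j Aij]] := mxnorm_attained A; rewrite -Aij.
rewrite -(nuD_dominant (y := B i j)); first by have := mxnorm_ge (A + B) i j; rewrite mxE.
by apply: le_lt_trans (mxnorm_ge B i j) _; rewrite Aij.
Qed.

Lemma mxnorm_sum_le (I : finType) (F : I -> 'M[K]_2) r :
  0 <= r -> (forall i, mxnorm (F i) <= r) -> mxnorm (\sum_i F i) <= r.
Proof.
move=> r0 Fr; elim/big_ind: _ => //; first by rewrite mxnorm0.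
by move=> A B; apply: mxnormD_le.
Qed.

Lemma mxnormM A B : mxnorm (A *m B) <= mxnorm A * mxnorm B.
Proof.
apply: mxnorm_le => i j; rewrite mxE; apply: nu_sum_le => [|k].
  by rewrite mulr_ge0 ?mxnorm_ge0.
by rewrite nuM ler_pM ?nu_ge0 ?mxnorm_ge.
Qed.

Lemma mxnormZ c A : mxnorm (c *: A) = nu c * mxnorm A.
Proof.
apply/le_anti; rewrite mxnorm_le => [|i j]; last first.
  by rewrite mxE nuM ler_wpM2l ?nu_ge0 ?mxnorm_ge.
have [i [j <-]] := mxnorm_attained A.
by have := mxnorm_ge (c *: A) i j; rewrite mxE nuM.
Qed.

Lemma mxnormMn A m : mxnorm (A *+ m) <= mxnorm A.
Proof.
rewrite -scaler_nat mxnormZ -[leRHS]mul1r.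
by rewrite ler_wpM2r ?mxnorm_ge0 ?nu_natr_le1.
Qed.

Lemma mxnormX A k : mxnorm (A ^+ k) <= mxnorm A ^+ k.
Proof.
elim: k => [|k IH].
  by rewrite !expr0; apply: mxnorm_le => i j; rewrite mxE; case: eqP; rewrite ?nu1 ?nu0.
rewrite exprSr -mulmxE exprSr; apply: le_trans (mxnormM _ _) _.
by rewrite ler_wpM2r ?mxnorm_ge0.
Qed.

Lemma finite_residue_nat_lt1 :
  finite_residue_field nu -> exists2 n, (0 < n)%N & nu n%:R < 1.
Proof.
case=> s [_ res]; pose near k a := nu (k%:R - a) < 1.
have near_s k : has (near k) s.
  by have [a sa ka] := res _ (nu_natr_le1 k); apply/hasP; exists a.
have find_lt k : (find (near k) s < size s)%N by rewrite -has_find.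
pose f (k : 'I_(size s).+1) : 'I_(size s) := Ordinal (find_lt k).
have close i j : f i = f j -> nu (i%:R - j%:R) < 1.
  move=> /(congr1 val) /= fij; have := nth_find 0 (near_s i); have := nth_find 0 (near_s j).
  rewrite -fij /near; set a := nth 0 s _ => ja ia.
  have -> : i%:R - j%:R = (i%:R - a) + - (j%:R - a) :> K by ring.
  by rewrite nuD_lt // nuN.
apply: NNPP => none; suff /leq_card : injective f by rewrite !card_ord ltnn.
have apart (i j : nat) : (i < j)%N -> ~ nu (i%:R - j%:R) < 1.
  move=> ij ij1; apply: none; exists (j - i)%N; first by rewrite subn_gt0.
  by rewrite natrB ?(ltnW ij) // -nuN opprB.
move=> i j /close fij; apply/val_inj; case: (ltngtP i j) => // [ij | ji].
- by have := apart _ _ ij fij.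
- by have := apart _ _ ji; rewrite -nuN opprB.
Qed.

(** * Discreteness near the identity *)

Lemma discrete_subgroupS (G H : mat K -> Prop) :
  (forall x, H x -> G x) -> discrete_subgroup nu G -> discrete_subgroup nu H.
Proof.
move=> HG Gdisc g Hg; have [e e0 De] := Gdisc g (HG g Hg).
by exists e => // h Hh; apply: De; apply: HG.
Qed.

Definition one_isolated (G : mat K -> Prop) : Prop :=
  exists2 e : R, 0 < e & forall h, G h -> mxnorm (h - 1) < e -> h = 1.

Lemma discrete_one_isolated G : G 1%:M -> discrete_subgroup nu G -> one_isolated G.
Proof.
move=> G1 /(_ _ G1)[e e0 De]; exists e => // h Gh he.
by apply: De => // i j; have := mxnorm_ltP he i j; rewrite !mxE.
Qed.

Lemma one_isolated_discrete G :
  is_subgroup_SL2 G -> one_isolated G -> discrete_subgroup nu G.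
Proof.
move=> [Gdet _ GM GV] [e e0 De] g Gg.
have gU : g \in unitmx by rewrite unitmxE Gdet ?unitr1.
pose C := mxnorm (invmx g) + 1.
have C0 : 0 < C by rewrite ltr_wpDl ?mxnorm_ge0.
exists (e / C) => [|h Gh hg]; first by rewrite divr_gt0.
have hg' : mxnorm (h - g) < e / C by apply: mxnorm_lt => i j; rewrite !mxE.
suff hg1 : h *m invmx g = 1 by rewrite -[h]mulmx1 -(mulVmx gU) mulmxA hg1 mul1mx.
apply: De; first exact: GM _ _ Gh (GV _ Gg).
have -> : h *m invmx g - 1 = (h - g) *m invmx g by rewrite mulmxBl mulmxV.
apply: le_lt_trans (mxnormM _ _) _.
rewrite ltr_pdivlMr // in hg'; apply: le_lt_trans hg'.
by rewrite ler_wpM2l ?mxnorm_ge0 // lerDl.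
Qed.

Lemma mxnorm_expn_sub1 (n : nat) X : 0 < nu n%:R -> mxnorm X < nu n%:R ->
  mxnorm ((X + 1) ^+ n - 1) = nu n%:R * mxnorm X.
Proof.
move=> n0 Xn; have [->|X0] := eqVneq X 0; first by rewrite add0r expr1n subrr mxnorm0 mulr0.
case: n n0 Xn => [|n] n0 Xn; first by rewrite nu0 ltxx in n0.
have X1 : mxnorm X <= 1 by apply/ltW/(lt_le_trans Xn)/nu_natr_le1.
rewrite exprD1n big_ord_recl big_ord_recl /= expr0 bin0 expr1 bin1 (addrC 1) addrK.
set higher := \sum_(i < n) _.
suff hi : mxnorm higher < mxnorm (n.+1%:R *: X).
  by rewrite -[X *+ _]scaler_nat mxnormD_dominant // mxnormZ.
rewrite mxnormZ; apply: (@le_lt_trans _ _ (mxnorm X ^+ 2)); last first.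
  by rewrite expr2 ltr_pM2r ?mxnorm_gt0.
apply: mxnorm_sum_le => [|i]; first by rewrite exprn_ge0 ?mxnorm_ge0.
apply: le_trans (mxnormMn _ _) _; apply: le_trans (mxnormX _ _) _.
by rewrite /bump /= !add1n ler_wiXn2l ?mxnorm_ge0.
Qed.

Lemma mxnorm_expn_iter_sub1 (n : nat) h k : 0 < nu n%:R ->
  mxnorm (h - 1) < nu n%:R ->
  mxnorm (h ^+ (n ^ k) - 1) = nu n%:R ^+ k * mxnorm (h - 1).
Proof.
move=> n0 hn; elim: k => [|k IH]; first by rewrite expn0 expr1 expr0 mul1r.
rewrite expnSr exprM -[h ^+ _](subrK 1) mxnorm_expn_sub1 // IH.
  by rewrite exprS mulrA.
apply: le_lt_trans hn; rewrite -[leRHS]mul1r ler_wpM2r ?mxnorm_ge0 //.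
by rewrite exprn_ile1 ?nu_ge0 ?nu_natr_le1.
Qed.

Lemma gen2_expr (a : mat K) k : gen2 a a (a ^+ k).
Proof.
move=> H [_ H1 HM _] Ha _; elim: k => [|k IH]; first by rewrite expr0.
by rewrite exprSr -mulmxE; apply: HM.
Qed.

Lemma cyclic_discrete_one_isolated (n : nat) (G : mat K -> Prop) :
  0 < nu n%:R < 1 -> (forall h, G h -> discrete_subgroup nu (gen2 h h)) ->
  one_isolated G.
Proof.
move=> /andP[n0 n1] Gcyc; exists (nu n%:R) => // h Gh hn; apply: NNPP => h1.
have h10 : 0 < mxnorm (h - 1) by rewrite mxnorm_gt0 // subr_eq0; apply/eqP.
have [e e0 De] := discrete_one_isolated (@gen2_expr h 0) (Gcyc h Gh).
have [k nk] := exists_exprn_lt (nu_ge0 _) n1 (divr_gt0 e0 h10).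
have hk := mxnorm_expn_iter_sub1 k n0 hn.
have hk1 : h ^+ (n ^ k) = 1.
  by apply: De; [exact: gen2_expr | rewrite hk -ltr_pdivlMr].
move/eqP: hk; rewrite hk1 subrr mxnorm0 eq_sym mulf_eq0 expf_eq0.
by rewrite !gt_eqF ?andbF.
Qed.

Lemma not_one_isolated_near (G : mat K -> Prop) e : ~ one_isolated G -> 0 < e ->
  exists h, [/\ G h, h - 1 != 0 & mxnorm (h - 1) < e].
Proof.
move=> not_isolated e0; apply: NNPP => none; apply: not_isolated.
exists e => // h Gh he; apply: NNPP => h1; apply: none.
by exists h; rewrite subr_eq0; split=> //; apply/eqP.
Qed.

Lemma conjmx_sub1 (a h : mat K) : a \in unitmx ->
  a *m h *m invmx a - 1 = a *m (h - 1) *m invmx a.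
Proof. by move=> aU; rewrite mulmxBr mulmxBl mulmx1 mulmxV. Qed.

Lemma mxnorm_conj_sub1 a h : a \in unitmx ->
  mxnorm (a *m h *m invmx a - 1) <= mxnorm a * mxnorm (invmx a) * mxnorm (h - 1).
Proof.
move=> aU; rewrite conjmx_sub1 //; apply: le_trans (mxnormM _ _) _.
rewrite mulrAC ler_wpM2r ?mxnorm_ge0 //.
exact: mxnormM.
Qed.

Section PositiveCharacteristic.
Variables (p : nat) (G : mat K -> Prop).
Hypotheses (pK : p \in [pchar K]) (HG : is_subgroup_SL2 G).
Hypothesis Gcyc : forall h, G h -> discrete_subgroup nu (gen2 h h).

Lemma near_one_sqmx0 h : G h -> mxnorm (h - 1) < 1 -> (h - 1) *m (h - 1) = 0.
Proof.
move=> Gh h1; set X := h - 1.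
have p1 : (1 < p)%N := prime_gt1 (pcharf_prime pK).
have pM : p \in [pchar 'M[K]_2] := rmorph_pchar (@scalar_mx K 2) pK.
have hX k : h ^+ (p ^ k) = X ^+ (p ^ k) + 1 by rewrite -exprD1_pchar // subrK.
have [e e0 De] := discrete_one_isolated (@gen2_expr h 0) (Gcyc Gh).
have [N XN] := exists_exprn_lt (mxnorm_ge0 X) h1 e0.
have /(congr1 (fun A => A - 1)) : h ^+ (p ^ N) = 1.
  apply: De; first exact: gen2_expr.
  rewrite hX addrK; apply: le_lt_trans (mxnormX _ _) (le_lt_trans _ XN).
  by rewrite ler_wiXn2l ?mxnorm_ge0 ?ltW // ltnW // ltn_expl.
rewrite hX addrK subrr; apply: nilpotent_mx2_sq0.
by rewrite expn_gt0 ltnW.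
Qed.

Lemma near_one_mul_sub1_eq0 h1 h2 : G h1 -> G h2 ->
  mxnorm (h1 - 1) < 1 -> mxnorm (h2 - 1) < 1 -> (h2 - 1) *m (h1 - 1) = 0.
Proof.
case: HG => _ _ GM _ G1 G2 h1_1 h2_1.
have h12E : h1 *m h2 - 1 = (h1 - 1) + (h2 - 1) + (h1 - 1) *m (h2 - 1).
  by apply: eq_mx2; rewrite !(mulmx2E, mxE) /=; ring.
have h12_1 : mxnorm (h1 *m h2 - 1) < 1.
  rewrite h12E; apply: mxnormD_lt; first exact: mxnormD_lt.
  apply: le_lt_trans (mxnormM _ _) _.
  by rewrite -[ltRHS]mulr1 ltr_pM ?mxnorm_ge0.
have [t1 _] := sqmx0_trace_det (near_one_sqmx0 G1 h1_1).
have [t2 _] := sqmx0_trace_det (near_one_sqmx0 G2 h2_1).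
have [t12 _] := sqmx0_trace_det (near_one_sqmx0 (GM _ _ G1 G2) h12_1).
apply: sqmx0_trace_mul_eq0; rewrite ?near_one_sqmx0 //.
by move: t12; rewrite h12E mxtraceD mxtraceD t1 t2 !add0r.
Qed.

Lemma common_eigenvector : ~ one_isolated G ->
  exists2 u : 'cV[K]_2, u != 0 & forall a, G a -> exists l, a *m u = l *: u.
Proof.
case: HG => Gdet _ GM GV not_isolated.
have [h0 [Gh0 h0_1 h0_near]] := not_one_isolated_near not_isolated ltr01.
have [j u0] : exists j, col j (h0 - 1) != 0.
  have /matrix0Pn[i [j Xij]] := h0_1.
  by exists j; apply/matrix0Pn; exists i, 0; rewrite mxE.
set u := col j (h0 - 1) in u0.
have ker_u h : G h -> mxnorm (h - 1) < 1 -> (h - 1) *m u = 0.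
  by move=> Gh h1; rewrite /u colE mulmxA near_one_mul_sub1_eq0 ?mul0mx.
suff eigen_inv a : G a -> exists l, invmx a *m u = l *: u.
  by exists u => // a Ga; have := eigen_inv _ (GV _ Ga); rewrite invmxK.
move=> Ga; have aU : a \in unitmx by rewrite unitmxE Gdet ?unitr1.
pose C := mxnorm a * mxnorm (invmx a) + 1.
have C1 : 1 <= C by rewrite lerDr mulr_ge0 ?mxnorm_ge0.
have C0 : 0 < C := lt_le_trans ltr01 C1.
have CV0 : 0 < C^-1 by rewrite invr_gt0.
have [h [Gh h_1 h_near]] := not_one_isolated_near not_isolated CV0.
have h1 : mxnorm (h - 1) < 1 by apply: lt_le_trans h_near _; rewrite invf_le1.
have conj_near : mxnorm (a *m h *m invmx a - 1) < 1.
  apply: le_lt_trans (mxnorm_conj_sub1 h aU) _.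
  have : mxnorm (h - 1) * C < 1 by rewrite -ltr_pdivlMr // mul1r.
  rewrite /C; have := mxnorm_ge0 (h - 1); have := mxnorm_ge0 a.
  have := mxnorm_ge0 (invmx a); nra.
have := ker_u _ (GM _ _ (GM _ _ Ga Gh) (GV _ Ga)) conj_near.
rewrite conjmx_sub1 // -!mulmxA => /(congr1 (mulmx (invmx a))).
rewrite mulmx0 !mulmxA mulVmx // mul1mx -mulmxA.
exact: mx2_kernel_colinear h_1 u0 (ker_u _ Gh h1).
Qed.

End PositiveCharacteristic.

(** * Vertices and ends of the Bruhat-Tits tree *)

Lemma lattice_mulmx_unimodular (A T T' : mat K) : mxnorm T <= 1 -> mxnorm T' <= 1 ->
  T *m T' = 1%:M -> forall v, lattice nu (A *m T) v <-> lattice nu A v.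
Proof.
have integral (S : mat K) (x : vec K) : mxnorm S <= 1 -> (forall i, nu (x i 0) <= 1) ->
    forall i, nu ((S *m x) i 0) <= 1.
  move=> S1 x1 i; rewrite mulmx2E; apply: nuD_le; rewrite nuM mulr_ile1 ?nu_ge0 ?x1 //;
    exact: le_trans (mxnorm_ge _ _ _) S1.
move=> T1 T'1 TT' v; split=> [[x [x1 ->]] | [x [x1 ->]]].
  by exists (T *m x); rewrite mulmxA; split=> //; apply: integral.
exists (T' *m x); rewrite mulmxA -(mulmxA A) TT' mulmx1; split=> //.
exact: integral.
Qed.

Lemma scale_lattice (A : mat K) c v : scale_set c (lattice nu A) v <-> lattice nu (c *: A) v.
Proof.
split=> [[_ [[x [x1 ->]] ->]] | [x [x1 ->]]]; first by exists x; rewrite scalemxAl.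
by exists (A *m x); rewrite scalemxAl; split=> //; exists x.
Qed.

Lemma same_vertex_scale_unimodular (A T T' : mat K) c : c != 0 ->
  mxnorm T <= 1 -> mxnorm T' <= 1 -> T *m T' = 1%:M -> same_vertex nu A (c *: A *m T).
Proof.
move=> c0 T1 T'1 TT'; exists c => // v.
by rewrite (lattice_mulmx_unimodular _ T1 T'1 TT') scale_lattice.
Qed.

Lemma lattice_diagP (M : mat K) a b v : M \in unitmx -> a != 0 -> b != 0 ->
  lattice nu (M *m mx2 a 0 0 b) v <->
  nu ((invmx M *m v) 0 0) <= nu a /\ nu ((invmx M *m v) 1 0) <= nu b.
Proof.
move=> MU a0 b0; split=> [[x [x1 ->]] | []].
  rewrite -mulmxA mulKmx // mulmx_diag2 !mx2E !nuM.
  by split; rewrite -[leRHS]mulr1 ler_wpM2l ?nu_ge0.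
set y := invmx M *m v => y0 y1.
exists (cv2 (y 0 0 / a) (y 1 0 / b)); split.
  by move=> i; case: (ord2P i) => ->; rewrite mx2E nuM nuV ler_pdivrMr ?mul1r ?nu_gt0.
rewrite -mulmxA mulmx_diag2 !mx2E [a * _]mulrC [b * _]mulrC !divfK //.
have -> : cv2 (y 0 0) (y 1 0) = y by apply: eq_cv2; rewrite !mx2E.
by rewrite /y mulKVmx.
Qed.

Lemma same_vertex_upper_shift (M : mat K) (x lam beta : K) (k m n : nat) :
  x != 0 -> lam != 0 -> nu (lam ^+ 2 * x ^+ m / x ^+ k) = 1 ->
  nu (beta * lam * x ^+ (n + m)) <= 1 ->
  same_vertex nu (M *m mx2 lam beta 0 lam^-1 *m mx2 1 0 0 (x ^+ (n + k)))
                 (M *m mx2 1 0 0 (x ^+ (n + m))).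
Proof.
move=> x0 lam0; set s := lam ^+ 2 * _ / _; set t := - (beta * lam * x ^+ (n + m)).
move=> s1 t1; have {}t1 : nu t <= 1 by rewrite /t nuN.
have s0 : s != 0.
  by apply/eqP => s0; move: s1; rewrite s0 nu0 => /eqP; rewrite eq_sym oner_eq0.
have xX0 j : x ^+ j != 0 by rewrite expf_neq0.
have core : mx2 1 0 0 (x ^+ (n + m)) =
    lam^-1 *: (mx2 lam beta 0 lam^-1 *m mx2 1 0 0 (x ^+ (n + k)) *m mx2 1 t 0 s).
  apply: eq_mx2; rewrite [RHS]mxE !mulmx2E !mx2E /s /t !exprD;
    by field; rewrite ?xX0 lam0.
rewrite core -scalemxAr !mulmxA scalemxAl.
apply: (same_vertex_scale_unimodular _ (T' := mx2 1 (- t / s) 0 s^-1)).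
- by rewrite invr_eq0.
- apply: mxnorm_le => i j; case: (ord2P i) => ->; case: (ord2P j) => ->;
    by rewrite mx2E ?nu1 ?nu0 ?s1 ?ler01.
- apply: mxnorm_le => i j; case: (ord2P i) => ->; case: (ord2P j) => ->;
    by rewrite mx2E ?nu1 ?nu0 ?nuV ?s1 ?invr1 ?ler01 // nuM nuN nuV s1 invr1 mulr1.
- by apply: eq_mx2; rewrite mulmx2E !mx2E !mxE /=; field.
Qed.

Section LineRay.
Variables (pi : K) (u : vec K).
Hypotheses (pi_unif : uniformizer nu pi) (u0 : u != 0).

Let q_gt0 : 0 < nu pi. Proof. by case: pi_unif => /andP[]. Qed.
Let q_lt1 : nu pi < 1. Proof. by case: pi_unif => /andP[]. Qed.
Let pi0 : pi != 0. Proof. by apply: contraTneq q_gt0 => ->; rewrite nu0 ltxx. Qed.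
Let qX_ltS n : nu pi ^+ n.+1 < nu pi ^+ n.
Proof. by rewrite exprS -[ltRHS]mul1r ltr_pM2r ?exprn_gt0. Qed.

Definition ext_basis : mat K :=
  if u 0 0 == 0 then mx2 (u 0 0) 1 (u 1 0) 0 else mx2 (u 0 0) 0 (u 1 0) 1.

Lemma ext_basis_unit : ext_basis \in unitmx.
Proof.
rewrite unitmxE unitfE det_mx2 /ext_basis; have [u00|u00] := eqVneq (u 0 0) 0.
  rewrite !mx2E mulr0 sub0r mul1r oppr_eq0; apply: contraNneq u0 => u10.
  by apply/eqP/eq_cv2; rewrite mxE.
by rewrite !mx2E mulr1 mul0r subr0.
Qed.

Lemma ext_basis_e1 : ext_basis *m cv2 1 0 = u.
Proof.
by rewrite /ext_basis; case: ifP => _; apply: eq_cv2; rewrite mulmx2E !mx2E; ring.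
Qed.

Lemma ext_basis_coordsK a b : invmx ext_basis *m (ext_basis *m cv2 a b) = cv2 a b.
Proof. by rewrite mulKmx ?ext_basis_unit. Qed.

(* The lattice spanned by [u] and [pi ^+ n] times the second basis vector:
   these vertices run along the ray towards the end given by the line [K u]. *)
Definition line_ray (n : nat) : mat K := ext_basis *m mx2 1 0 0 (pi ^+ n).

Lemma scale_line_rayP c n v : c != 0 ->
  scale_set c (lattice nu (line_ray n)) v <->
  nu ((invmx ext_basis *m v) 0 0) <= nu c /\
  nu ((invmx ext_basis *m v) 1 0) <= nu c * nu pi ^+ n.
Proof.
move=> c0; rewrite scale_lattice /line_ray scalemxAr.
have -> : c *: mx2 1 0 0 (pi ^+ n) = mx2 c 0 0 (c * pi ^+ n).
  by apply: eq_mx2; rewrite mxE !mx2E ?mulr1 ?mulr0.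
by rewrite lattice_diagP ?ext_basis_unit ?mulf_neq0 ?expf_neq0 ?pi0 // nuM nuX.
Qed.

Lemma line_rayP n v : lattice nu (line_ray n) v <->
  nu ((invmx ext_basis *m v) 0 0) <= 1 /\ nu ((invmx ext_basis *m v) 1 0) <= nu pi ^+ n.
Proof.
by rewrite lattice_diagP ?ext_basis_unit ?oner_neq0 ?expf_neq0 ?pi0 // nu1 nuX.
Qed.

Lemma line_ray_adjacent n : adjacent nu (line_ray n) (line_ray n.+1).
Proof.
have one0 := oner_neq0 K.
exists pi, 1; split=> //.
- split=> [v|].
    rewrite !scale_line_rayP // nu1 mul1r => -[v0 v1].
    by rewrite exprS (le_trans v0 (ltW q_lt1)).
  exists (ext_basis *m cv2 1 0); split.
    by rewrite scale_line_rayP // ext_basis_coordsK !mx2E nu1 nu0 mul1r lexx exprn_ge0 ?nu_ge0.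
  by rewrite scale_line_rayP // ext_basis_coordsK !mx2E nu1 => -[]; rewrite leNgt q_lt1.
- split=> [v|].
    rewrite scale_line_rayP // line_rayP nu1 mul1r => -[v0 v1].
    by rewrite v0 (le_trans v1 (ltW (qX_ltS n))).
  exists (ext_basis *m cv2 0 (pi ^+ n)); split.
    by rewrite line_rayP ext_basis_coordsK !mx2E nu0 nuX ler01 lexx.
  rewrite scale_line_rayP // ext_basis_coordsK !mx2E nuX nu1 mul1r => -[_].
  by rewrite leNgt qX_ltS.
Qed.

Lemma line_ray_not_same_vertex n : ~ same_vertex nu (line_ray n) (line_ray n.+2).
Proof.
case=> c c0 Lc.
have /Lc : lattice nu (line_ray n.+2) (ext_basis *m cv2 1 0).
  by rewrite line_rayP ext_basis_coordsK !mx2E nu1 nu0 lexx exprn_ge0 ?nu_ge0.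
rewrite scale_line_rayP // ext_basis_coordsK !mx2E nu1 => -[c_ge1 _].
have /Lc : scale_set c (lattice nu (line_ray n)) (ext_basis *m cv2 c 0).
  by rewrite scale_line_rayP // ext_basis_coordsK !mx2E nu0 lexx mulr_ge0 ?exprn_ge0 ?nu_ge0.
rewrite line_rayP ext_basis_coordsK !mx2E => -[c_le1 _].
have /Lc : scale_set c (lattice nu (line_ray n)) (ext_basis *m cv2 0 (c * pi ^+ n)).
  by rewrite scale_line_rayP // ext_basis_coordsK !mx2E nu0 nuM nuX nu_ge0.
rewrite line_rayP ext_basis_coordsK !mx2E nuM nuX (@le_anti _ _ (nu c) 1) ?c_ge1 ?c_le1 //.
by rewrite mul1r => -[_]; apply/negP; rewrite -ltNge (lt_trans (qX_ltS _) (qX_ltS _)).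
Qed.

Lemma line_ray_ray : ray nu line_ray.
Proof.
move=> n; split; [|exact: line_ray_adjacent|exact: line_ray_not_same_vertex].
rewrite /vertex unitmx_mul ext_basis_unit unitmxE unitfE det_mx2 !mx2E.
by rewrite mulr0 subr0 mul1r expf_neq0 ?pi0.
Qed.

Lemma eigen_upper_triangular a l : \det a = 1 -> a *m u = l *: u ->
  exists lam beta, lam != 0 /\ a *m ext_basis = ext_basis *m mx2 lam beta 0 lam^-1.
Proof.
move=> deta au; have EU := ext_basis_unit.
set B := invmx ext_basis *m a *m ext_basis.
have aE : a *m ext_basis = ext_basis *m B by rewrite /B mulmxA mulKVmx.
have Be1 : B *m cv2 1 0 = cv2 l 0.
  rewrite /B -!mulmxA ext_basis_e1 au -scalemxAr -{1}ext_basis_e1 mulKmx //.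
  by apply: eq_cv2; rewrite !mxE ?mulr1 ?mulr0.
have B10 : B 1 0 = 0.
  have := congr1 (fun v : vec K => v 1 0) Be1.
  by rewrite /= mulmx2E !mx2E mulr1 mulr0 addr0.
have detB : B 0 0 * B 1 1 = 1.
  have : \det B = 1 by rewrite /B !det_mulmx det_inv deta mulr1 mulVf -?unitfE -?unitmxE.
  by rewrite det_mx2 B10 mulr0 subr0.
have lam0 : B 0 0 != 0 by apply: contra_eq_neq detB => ->; rewrite mul0r eq_sym oner_neq0.
exists (B 0 0), (B 0 1); split=> //; rewrite aE; congr (_ *m _).
apply: eq_mx2; rewrite !mx2E //; apply: (mulfI lam0); rewrite detB mulfV //.
Qed.

Hypothesis nu_discrete : forall x, x != 0 -> exists j : int, nu x = nu pi ^ j.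

Lemma exists_balanced_shift lam m0 : lam != 0 ->
  exists k m, (m0 <= m)%N /\ nu (lam ^+ 2 * pi ^+ m / pi ^+ k) = 1.
Proof.
move=> lam0; have qX0 j : nu pi ^+ j != 0 by rewrite gt_eqF ?exprn_gt0.
have [[j|j] lamj] := nu_discrete lam0.
- have {}lamj : nu lam = nu pi ^+ j := lamj.
  exists (m0 + j * 2)%N, m0; split=> //.
  by rewrite !nuM nuV !nuX lamj exprD exprM; field; rewrite !qX0.
- have {}lamj : nu lam = (nu pi ^+ j.+1)^-1 := lamj.
  exists m0, (m0 + j.+1 * 2)%N; split; first exact: leq_addr.
  by rewrite !nuM nuV !nuX lamj exprD exprM; field; rewrite !qX0.
Qed.

Lemma same_end_act_line_ray a l : \det a = 1 -> a *m u = l *: u ->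
  same_end nu (act_ray a line_ray) line_ray.
Proof.
move=> deta au; have [lam [beta [lam0 aE]]] := eigen_upper_triangular deta au.
have [m0 m0_bound] : exists m0, nu (beta * lam) * nu pi ^+ m0 <= 1.
  have [->|bl0] := eqVneq (beta * lam) 0; first by exists 0%N; rewrite nu0 mul0r ler01.
  have blV_gt0 : 0 < (nu (beta * lam))^-1 by rewrite invr_gt0 nu_gt0.
  have [m0 qm0] := exists_exprn_lt (nu_ge0 pi) q_lt1 blV_gt0.
  exists m0; rewrite -(mulfV (lt0r_neq0 (nu_gt0 bl0))).
  by rewrite ler_wpM2l ?nu_ge0 ?ltW.
have [k [m [m0m balanced]]] := exists_balanced_shift m0 lam0.
exists k, m => n; rewrite /act_ray /line_ray mulmxA aE.
apply: same_vertex_upper_shift => //; rewrite nuM nuX.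
apply: le_trans m0_bound; rewrite ler_wpM2l ?nu_ge0 // ler_wiXn2l ?nu_ge0 ?ltW //.
exact: leq_trans m0m (leq_addl _ _).
Qed.

Lemma stabilises_end_eigenvector (G : mat K -> Prop) :
  (forall a, G a -> \det a = 1) -> (forall a, G a -> exists l, a *m u = l *: u) ->
  stabilises_end nu G.
Proof.
move=> Gdet Geigen; exists line_ray; first exact: line_ray_ray.
by move=> a Ga; have [l au] := Geigen a Ga; exact: same_end_act_line_ray (Gdet a Ga) au.
Qed.

End LineRay.

End LocalField.

Theorem proposition1p3 (R : realType) (K : fieldType) (nu : K -> R)
  (HK : nonarch_local_field nu) (G : mat K -> Prop)
  (HG : is_subgroup_SL2 G) (Hne : ~ elementary nu G) :
  discrete_subgroup nu G <->
  (forall a b, G a -> G b -> discrete_subgroup nu (gen2 a b)).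
Proof.
case: HK => nu_abs [pi [pi_unif nu_discrete]] _ residue.
split=> [Gdisc a b Ga Gb | G2].
  by apply: discrete_subgroupS Gdisc => x; apply.
have Gcyc h : G h -> discrete_subgroup nu (gen2 h h) by move=> Gh; apply: G2.
apply: one_isolated_discrete => //.
have [n n_gt0 n_lt1] := finite_residue_nat_lt1 nu_abs residue.
have [nK0 | nK0] := boolP (n%:R == 0 :> K).
- have [p pK] := natf0_pchar n_gt0 nK0.
  apply: NNPP => not_isolated; apply: Hne; right; left.
  have [u u0 Geigen] := common_eigenvector nu_abs pK HG Gcyc not_isolated.
  by apply: (stabilises_end_eigenvector nu_abs pi_unif u0 nu_discrete _ Geigen); case: HG.
- have n_nu : 0 < nu n%:R < 1 by rewrite n_lt1 (nu_gt0 nu_abs).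
  exact: (cyclic_discrete_one_isolated nu_abs n_nu Gcyc).
Qed.
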